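(* The theory $\mathcal{T}+\mathrm{IND}(\mathrm{Literal}(\mathcal{T}))$ proves the (universal closures of the) formulas $x\neq0\to x=s(p(x))$, $x+y=y+x$, $(x+y)+z=x+(y+z)$, and $x+y=x+z\to y=z$.
   Context: Language $\{0/0,s/1,p/1,+/2\}$; $\mathcal{T}$ has axioms (universally closed) $0\neq s(x)$, $p(0)=0$, $p(s(x))=x$, $x+0=x$, $x+s(y)=s(x+y)$. $\mathrm{Literal}(\mathcal{T})$ is the set of literals (atoms and negated atoms) of this language. $I_x\varphi=\forall\vec z(\varphi(0,\vec z)\wedge\forall x(\varphi(x,\vec z)\to\varphi(s(x),\vec z))\to\forall x\varphi(x,\vec z))$ and $\mathrm{IND}(\Gamma)=\{I_x\gamma:\gamma\in\Gamma\}$. *)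

From Stdlib Require Import List Arith.
Import ListNotations.

Inductive term : Type :=
| var : nat -> term
| zero : term
| succ : term -> term
| pred : term -> term
| plus : term -> term -> term.

Inductive form : Type :=
| Eq : term -> term -> form
| Bot : form
| Imp : form -> form -> form
| And : form -> form -> form
| Or : form -> form -> form
| All : form -> form
| Ex : form -> form.

Definition Neg (A : form) : form := Imp A Bot.

Fixpoint tsubst (sigma : nat -> term) (t : term) : term :=
  match t with
  | var n => sigma n
  | zero => zero
  | succ u => succ (tsubst sigma u)
  | pred u => pred (tsubst sigma u)
  | plus u v => plus (tsubst sigma u) (tsubst sigma v)
  end.

Definition tshift (t : term) : term := tsubst (fun k => var (S k)) t.

Definition up (sigma : nat -> term) : nat -> term :=
  fun n => match n with 0 => var 0 | S k => tshift (sigma k) end.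

Fixpoint fsubst (sigma : nat -> term) (A : form) : form :=
  match A with
  | Eq s t => Eq (tsubst sigma s) (tsubst sigma t)
  | Bot => Bot
  | Imp B C => Imp (fsubst sigma B) (fsubst sigma C)
  | And B C => And (fsubst sigma B) (fsubst sigma C)
  | Or B C => Or (fsubst sigma B) (fsubst sigma C)
  | All B => All (fsubst (up sigma) B)
  | Ex B => Ex (fsubst (up sigma) B)
  end.

Definition inst (t : term) : nat -> term :=
  fun n => match n with 0 => t | S k => var k end.

Definition shift (A : form) : form := fsubst (fun k => var (S k)) A.

Inductive ND : list form -> form -> Prop :=
| nd_ax G A : In A G -> ND G A
| nd_impI G A B : ND (A :: G) B -> ND G (Imp A B)
| nd_impE G A B : ND G (Imp A B) -> ND G A -> ND G B
| nd_andI G A B : ND G A -> ND G B -> ND G (And A B)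
| nd_andE1 G A B : ND G (And A B) -> ND G A
| nd_andE2 G A B : ND G (And A B) -> ND G B
| nd_orI1 G A B : ND G A -> ND G (Or A B)
| nd_orI2 G A B : ND G B -> ND G (Or A B)
| nd_orE G A B C : ND G (Or A B) -> ND (A :: G) C -> ND (B :: G) C -> ND G C
| nd_raa G A : ND (Neg A :: G) Bot -> ND G A
| nd_allI G A : ND (map shift G) A -> ND G (All A)
| nd_allE G A t : ND G (All A) -> ND G (fsubst (inst t) A)
| nd_exI G A t : ND G (fsubst (inst t) A) -> ND G (Ex A)
| nd_exE G A B : ND G (Ex A) -> ND (A :: map shift G) (shift B) -> ND G B
| nd_refl G t : ND G (Eq t t)
| nd_leibniz G A s t :
    ND G (Eq s t) -> ND G (fsubst (inst s) A) -> ND G (fsubst (inst t) A).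

Definition Provable (Th : form -> Prop) (A : form) : Prop :=
  exists G : list form, (forall B, In B G -> Th B) /\ ND G A.

(* universal closure: bound on free variables, then prefix that many foralls *)
Fixpoint tbound (t : term) : nat :=
  match t with
  | var n => S n
  | zero => 0
  | succ u => tbound u
  | pred u => tbound u
  | plus u v => Nat.max (tbound u) (tbound v)
  end.

Fixpoint fbound (A : form) : nat :=
  match A with
  | Eq s t => Nat.max (tbound s) (tbound t)
  | Bot => 0
  | Imp B C | And B C | Or B C => Nat.max (fbound B) (fbound C)
  | All B | Ex B => Nat.pred (fbound B)
  end.

Fixpoint alls (n : nat) (A : form) : form :=
  match n with 0 => A | S k => All (alls k A) end.

Definition closure (A : form) : form := alls (fbound A) A.

Definition v0 := var 0.
Definition v1 := var 1.
Definition v2 := var 2.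

Inductive T_ax : form -> Prop :=
| T1 : T_ax (closure (Neg (Eq zero (succ v0))))
| T2 : T_ax (Eq (pred zero) zero)
| T3 : T_ax (closure (Eq (pred (succ v0)) v0))
| T4 : T_ax (closure (Eq (plus v0 zero) v0))
| T5 : T_ax (closure (Eq (plus v1 (succ v0)) (succ (plus v1 v0)))).

Inductive is_literal : form -> Prop :=
| lit_pos s t : is_literal (Eq s t)
| lit_neg s t : is_literal (Neg (Eq s t)).

(* induction axiom on variable 0 (= x); other free variables are parameters *)
Definition succ_at0 : nat -> term :=
  fun n => match n with 0 => succ (var 0) | S k => var (S k) end.

Definition ind_body (phi : form) : form :=
  Imp (And (fsubst (inst zero) phi) (All (Imp phi (fsubst succ_at0 phi))))
      (All phi).

Definition I_ax (phi : form) : form := closure (ind_body phi).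

Definition IND_Literal (A : form) : Prop :=
  exists phi, is_literal phi /\ A = I_ax phi.

Definition T_IND_Lit (A : form) : Prop := T_ax A \/ IND_Literal A.

(* Every fact needs a single induction on a literal.  For x <> 0 -> x = s(p x):
   assuming x <> 0 and x <> s(p x), induction on z proves z <> x, since
   s z = x would give s(p x) = s(p(s z)) = s z = x; taking z = x is absurd.
   Commutativity follows from 0 + x = x and s y + x = s(y + x), each proved by
   induction on x; associativity is induction on the last summand.  For
   cancellation, y <> w -> y + z <> w + z by induction on z (using
   y + z = p(y + s z)), which together with commutativity gives the claim. *)

From Stdlib Require Import List.
Import ListNotations.

Lemma tsubst_tsubst (sigma tau : nat -> term) (t : term) :
  tsubst sigma (tsubst tau t) = tsubst (fun n => tsubst sigma (tau n)) t.
Proof. induction t; simpl; congruence. Qed.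

Lemma tsubst_var (t : term) : tsubst var t = t.
Proof. induction t; simpl; congruence. Qed.

Lemma tsubst_inst_tshift (u t : term) : tsubst (inst u) (tshift t) = t.
Proof. unfold tshift. rewrite tsubst_tsubst. apply tsubst_var. Qed.

(* Lets [simpl] push the shift of the context through each hypothesis after a
   universal introduction, leaving the shifted tail [map shift G] intact. *)
Arguments shift A /.

Section DerivedRules.

Variable G : list form.

Lemma nd_allE2 (A : form) (t u : term) :
  ND G (All (All A)) -> ND G (fsubst (inst u) (fsubst (up (inst t)) A)).
Proof. intros H. apply nd_allE, (nd_allE _ (All A)), H. Qed.

Lemma nd_rewrite (s t : term) (A B C : form) :
  ND G (Eq s t) -> fsubst (inst s) A = B -> fsubst (inst t) A = C -> ND G B -> ND G C.
Proof. intros Hst <- <- HB. eapply nd_leibniz; eassumption. Qed.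

Lemma nd_sym (s t : term) : ND G (Eq s t) -> ND G (Eq t s).
Proof.
  intros H. apply (nd_rewrite s t (Eq (var 0) (tshift s)) (Eq s s)); simpl;
    rewrite ?tsubst_inst_tshift; auto using nd_refl.
Qed.

Lemma nd_trans (s t u : term) : ND G (Eq s t) -> ND G (Eq t u) -> ND G (Eq s u).
Proof.
  intros Hst Htu. apply (nd_rewrite t u (Eq (tshift s) (var 0)) (Eq s t)); simpl;
    rewrite ?tsubst_inst_tshift; auto.
Qed.

Lemma nd_cong (u s t : term) :
  ND G (Eq s t) -> ND G (Eq (tsubst (inst s) u) (tsubst (inst t) u)).
Proof.
  intros H. apply (nd_rewrite s t (Eq (tshift (tsubst (inst s) u)) u)
    (Eq (tsubst (inst s) u) (tsubst (inst s) u))); simpl;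
    rewrite ?tsubst_inst_tshift; auto using nd_refl.
Qed.

Lemma nd_cong_succ (s t : term) : ND G (Eq s t) -> ND G (Eq (succ s) (succ t)).
Proof. exact (nd_cong (succ (var 0)) s t). Qed.

Lemma nd_cong_pred (s t : term) : ND G (Eq s t) -> ND G (Eq (pred s) (pred t)).
Proof. exact (nd_cong (pred (var 0)) s t). Qed.

Lemma nd_cong_plus_r (u s t : term) :
  ND G (Eq s t) -> ND G (Eq (plus u s) (plus u t)).
Proof.
  intros H. generalize (nd_cong (plus (tshift u) (var 0)) s t H); simpl.
  now rewrite !tsubst_inst_tshift.
Qed.

Lemma nd_induction (phi : form) :
  ND G (ind_body phi) -> ND G (fsubst (inst zero) phi) ->
  ND G (All (Imp phi (fsubst succ_at0 phi))) -> ND G (All phi).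
Proof. intros HI Hbase Hstep. apply (nd_impE _ _ _ HI). now apply nd_andI. Qed.

End DerivedRules.

Definition axioms : list form :=
  [ closure (Eq (pred (succ v0)) v0);
    closure (Eq (plus v0 zero) v0);
    closure (Eq (plus v1 (succ v0)) (succ (plus v1 v0)));
    I_ax (Neg (Eq v0 v1));
    I_ax (Eq (plus zero v0) v0);
    I_ax (Eq (plus (succ v1) v0) (succ (plus v1 v0)));
    I_ax (Eq (plus v0 v1) (plus v1 v0));
    I_ax (Eq (plus (plus v1 v2) v0) (plus v1 (plus v2 v0)));
    I_ax (Neg (Eq (plus v1 v0) (plus v2 v0))) ].

Lemma axioms_in_theory (A : form) : In A axioms -> T_IND_Lit A.
Proof.
  intros HA. repeat destruct HA as [<- | HA]; try contradiction;
    first [left; constructor | right; eexists; split; [constructor | reflexivity]].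
Qed.

Lemma incl_axioms_map_shift (G : list form) :
  incl axioms G -> incl axioms (map shift G).
Proof.
  intros HG. change (incl (map shift axioms) (map shift G)). now apply incl_map.
Qed.

Lemma nd_axiom (G : list form) (A : form) : incl axioms G -> In A axioms -> ND G A.
Proof. intros HG HA. apply nd_ax, HG, HA. Qed.

Lemma provable_of_axioms (A : form) :
  (forall G, incl axioms G -> ND G A) -> Provable T_IND_Lit A.
Proof.
  intros HA. exists axioms. split; [exact axioms_in_theory | apply HA, incl_refl].
Qed.

Ltac in_list := repeat first [apply in_eq | apply in_cons].
Ltac axioms_incl :=
  first [assumption | apply incl_tl; axioms_incl | apply incl_axioms_map_shift; axioms_incl].
Ltac axiom := apply nd_axiom; [axioms_incl | unfold axioms; in_list].
Ltac hyp := apply nd_ax; in_list.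
Ltac intro_all := apply nd_allI; simpl.

Lemma nd_pred_succ (G : list form) (t : term) :
  incl axioms G -> ND G (Eq (pred (succ t)) t).
Proof. intros HG. refine (nd_allE _ (Eq (pred (succ v0)) v0) t _). axiom. Qed.

Lemma nd_plus_zero (G : list form) (t : term) :
  incl axioms G -> ND G (Eq (plus t zero) t).
Proof. intros HG. refine (nd_allE _ (Eq (plus v0 zero) v0) t _). axiom. Qed.

Lemma nd_plus_succ (G : list form) (t u : term) :
  incl axioms G -> ND G (Eq (plus t (succ u)) (succ (plus t u))).
Proof.
  intros HG.
  assert (H : ND G (All (All (Eq (plus v1 (succ v0)) (succ (plus v1 v0)))))) by axiom.
  generalize (nd_allE2 _ _ t u H); simpl. now rewrite tsubst_inst_tshift.
Qed.

Lemma nd_succ_pred_closure (G : list form) :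
  incl axioms G -> ND G (closure (Imp (Neg (Eq v0 zero)) (Eq v0 (succ (pred v0))))).
Proof.
  intros HG. unfold closure; simpl. intro_all. apply nd_impI, nd_raa.
  apply (nd_impE _ (Eq v0 v0)); [| apply nd_refl].
  refine (nd_allE _ (Neg (Eq v0 v1)) v0 _).
  apply nd_induction.
  - refine (nd_allE _ (ind_body (Neg (Eq v0 v1))) v0 _). axiom.
  - simpl. apply nd_impI, (nd_impE _ (Eq v0 zero)); [hyp | apply nd_sym; hyp].
  - intro_all. apply nd_impI, nd_impI.
    apply (nd_impE _ (Eq v1 (succ (pred v1)))); [hyp |].
    apply nd_sym, (nd_trans _ _ (succ v0)); [| hyp].
    apply nd_cong_succ, (nd_trans _ _ (pred (succ v0))).
    + apply nd_cong_pred, nd_sym; hyp.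
    + apply nd_pred_succ; axioms_incl.
Qed.

Lemma nd_zero_plus_all (G : list form) :
  incl axioms G -> ND G (All (Eq (plus zero v0) v0)).
Proof.
  intros HG. apply nd_induction; [axiom | apply nd_plus_zero; axioms_incl |].
  intro_all. apply nd_impI.
  eapply nd_trans; [apply nd_plus_succ; axioms_incl | apply nd_cong_succ; hyp].
Qed.

Lemma nd_zero_plus (G : list form) (t : term) :
  incl axioms G -> ND G (Eq (plus zero t) t).
Proof. intros HG. exact (nd_allE _ _ t (nd_zero_plus_all G HG)). Qed.

Lemma nd_succ_plus_all (G : list form) :
  incl axioms G -> ND G (All (All (Eq (plus (succ v1) v0) (succ (plus v1 v0))))).
Proof.
  intros HG. intro_all. apply nd_induction.
  - refine (nd_allE _ (ind_body (Eq (plus (succ v1) v0) (succ (plus v1 v0)))) v0 _).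
    axiom.
  - eapply nd_trans; [apply nd_plus_zero; axioms_incl |].
    apply nd_sym, nd_cong_succ, nd_plus_zero; axioms_incl.
  - intro_all. apply nd_impI.
    eapply nd_trans; [apply nd_plus_succ; axioms_incl |].
    eapply nd_trans; [apply nd_cong_succ; hyp |].
    apply nd_sym, nd_cong_succ, nd_plus_succ; axioms_incl.
Qed.

Lemma nd_succ_plus (G : list form) (t u : term) :
  incl axioms G -> ND G (Eq (plus (succ t) u) (succ (plus t u))).
Proof.
  intros HG. generalize (nd_allE2 _ _ t u (nd_succ_plus_all G HG)); simpl.
  now rewrite tsubst_inst_tshift.
Qed.

Lemma nd_plus_comm_closure (G : list form) :
  incl axioms G -> ND G (closure (Eq (plus v0 v1) (plus v1 v0))).
Proof.
  intros HG. unfold closure; simpl. intro_all. apply nd_induction.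
  - refine (nd_allE _ (ind_body (Eq (plus v0 v1) (plus v1 v0))) v0 _). axiom.
  - eapply nd_trans; [apply nd_zero_plus; axioms_incl |].
    apply nd_sym, nd_plus_zero; axioms_incl.
  - intro_all. apply nd_impI.
    eapply nd_trans; [apply nd_succ_plus; axioms_incl |].
    eapply nd_trans; [apply nd_cong_succ; hyp |].
    apply nd_sym, nd_plus_succ; axioms_incl.
Qed.

Lemma nd_plus_comm (G : list form) (t u : term) :
  incl axioms G -> ND G (Eq (plus t u) (plus u t)).
Proof.
  intros HG. generalize (nd_allE2 _ _ u t (nd_plus_comm_closure G HG)); simpl.
  now rewrite tsubst_inst_tshift.
Qed.

Lemma nd_plus_assoc_closure (G : list form) :
  incl axioms G -> ND G (closure (Eq (plus (plus v0 v1) v2) (plus v0 (plus v1 v2)))).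
Proof.
  intros HG. unfold closure; simpl. do 3 intro_all.
  refine (nd_allE _ (Eq (plus (plus v1 v2) v0) (plus v1 (plus v2 v0))) v2 _).
  apply nd_induction.
  - refine (nd_allE2 _ (ind_body (Eq (plus (plus v1 v2) v0) (plus v1 (plus v2 v0))))
      v1 v0 _).
    axiom.
  - eapply nd_trans; [apply nd_plus_zero; axioms_incl |].
    apply nd_sym, nd_cong_plus_r, nd_plus_zero; axioms_incl.
  - intro_all. apply nd_impI.
    eapply nd_trans; [apply nd_plus_succ; axioms_incl |].
    eapply nd_trans; [apply nd_cong_succ; hyp |].
    eapply nd_trans; [apply nd_sym, nd_plus_succ; axioms_incl |].
    apply nd_cong_plus_r, nd_sym, nd_plus_succ; axioms_incl.
Qed.

Lemma nd_plus_cancel_closure (G : list form) :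
  incl axioms G -> ND G (closure (Imp (Eq (plus v0 v1) (plus v0 v2)) (Eq v1 v2))).
Proof.
  intros HG. unfold closure; simpl. do 3 intro_all.
  apply nd_impI, nd_raa.
  apply (nd_impE _ (Eq (plus v1 v0) (plus v2 v0))).
  - refine (nd_allE _ (Neg (Eq (plus (var 2) v0) (plus (var 3) v0))) v0 _).
    apply nd_induction.
    + refine (nd_allE2 _ (ind_body (Neg (Eq (plus v1 v0) (plus v2 v0)))) v2 v1 _).
      axiom.
    + simpl. apply nd_impI, (nd_impE _ (Eq v1 v2)); [hyp |].
      eapply nd_trans; [apply nd_sym, nd_plus_zero; axioms_incl |].
      eapply nd_trans; [hyp | apply nd_plus_zero; axioms_incl].
    + intro_all. apply nd_impI, nd_impI.
      apply (nd_impE _ (Eq (plus (var 2) v0) (plus (var 3) v0))); [hyp |].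
      eapply nd_trans; [apply nd_sym, nd_pred_succ; axioms_incl |].
      eapply nd_trans; [apply nd_cong_pred, nd_sym, nd_plus_succ; axioms_incl |].
      eapply nd_trans; [apply nd_cong_pred; hyp |].
      eapply nd_trans; [apply nd_cong_pred, nd_plus_succ; axioms_incl |].
      apply nd_pred_succ; axioms_incl.
  - eapply nd_trans; [apply nd_plus_comm; axioms_incl |].
    eapply nd_trans; [hyp | apply nd_plus_comm; axioms_incl].
Qed.

Theorem lemma19 :
  Provable T_IND_Lit (closure (Imp (Neg (Eq v0 zero)) (Eq v0 (succ (pred v0))))) /\
  Provable T_IND_Lit (closure (Eq (plus v0 v1) (plus v1 v0))) /\
  Provable T_IND_Lit (closure (Eq (plus (plus v0 v1) v2) (plus v0 (plus v1 v2)))) /\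
  Provable T_IND_Lit (closure (Imp (Eq (plus v0 v1) (plus v0 v2)) (Eq v1 v2))).
Proof.
  repeat split; apply provable_of_axioms.
  - exact nd_succ_pred_closure.
  - exact nd_plus_comm_closure.
  - exact nd_plus_assoc_closure.
  - exact nd_plus_cancel_closure.
Qed.
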